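(* Let $L>0$ and $c_0>0$. Assume: [A1] there exist constants $C_L>0$ and $\varepsilon_L\in(0,1)$ such that $P\bigl[\sup_{u\in V_T(r)}\mathbb Z_T(u)\ge \exp(-r^{2-\varepsilon_L})\bigr]\le C_L/r^L$ for all $r>0$ and all $T\in\mathbb T$; [A2] $p$ is differentiable on $\mathbb R\setminus\{0\}$; [A3] there is $\varepsilon>0$ with $\sup_{-\varepsilon<x<\varepsilon}p(x)<\infty$; [A4] for every $j\in\mathcal J^{(1)}$, $\sup_{T\in\mathbb T}|\alpha_T^j\xi_T^j|\le c_0$ almost surely. Then there exist constants $C'_L>0$ and $\varepsilon'_L\in(0,1)$ such that $$P\Bigl[\sup_{u\in V_T(r)}\mathbb Z^\dagger_T(u)\ge \exp(-r^{2-\varepsilon'_L})\Bigr]\le \frac{C'_L}{r^L}$$ for all $r>0$ and all $T\in\mathbb T$.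
   Context: Let $\Theta\subset\mathbb R^{\mathsf p}$ be a bounded open set with closure $\overline\Theta$ and let $\theta^*\in\Theta$. Let $(\Omega,\mathcal F,P)$ be a probability space and $\mathbb T\subset\mathbb R_{\ge0}$ with $\sup\mathbb T=\infty$. For each $T\in\mathbb T$, $\mathbb H_T:\Omega\times\overline\Theta\to\mathbb R$ is a random field such that $\theta\mapsto\mathbb H_T(\theta)$ is continuous for every $\omega$. The penalty is $p_T(\theta)=\sum_{j=1}^{\mathsf p}\xi_T^j p(\theta_j)$ where $\xi_T^j>0$ are (possibly random) positive quantities and $p:\mathbb R\to\mathbb R_{\ge0}$ satisfies $p(0)=0$; put $\mathbb H^\dagger_T=\mathbb H_T-p_T$. Let $\mathcal J^{(0)}=\{j:\theta^*_j=0\}$, $\mathcal J^{(1)}=\{j:\theta^*_j\neq0\}$. Let $a_T=\mathrm{diag}(\alpha_T^1,\dots,\alpha_T^{\mathsf p})$ be a deterministic invertible diagonal matrix with $\|a_T\|\to0$ as $T\to\infty$, where $\|A\|$ is the square root of the largest eigenvalue of $A'A$. Let $\mathbb U_T=\{u\in\mathbb R^{\mathsf p}:\theta^*+a_Tu\in\overline\Theta\}$, $\mathbb Z_T(u)=\exp(\mathbb H_T(\theta^*+a_Tu)-\mathbb H_T(\theta^* ))$ and $\mathbb Z^\dagger_T(u)=\exp(\mathbb H^\dagger_T(\theta^*+a_Tu)-\mathbb H^\dagger_T(\theta^* ))$ for $u\in\mathbb U_T$, and $V_T(r)=\{u\in\mathbb U_T:|u|\ge r\}$. The supremum over the empty set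 is $-\infty$ by convention. *)

From HB Require Import structures.
From mathcomp Require Import all_boot all_order all_algebra.
From mathcomp Require Import all_classical all_reals all_analysis.
Set Implicit Arguments. Unset Strict Implicit. Unset Printing Implicit Defensive.
Import Order.TTheory GRing.Theory Num.Theory.
Import numFieldNormedType.Exports.
Local Open Scope classical_set_scope.
Local Open Scope ring_scope.

Section Defs.
Context {R : realType} {n : nat} {Om : Type}.

Definition eucl (u : 'rV[R]_n) : R := Num.sqrt (\sum_(i < n) (u 0 i) ^+ 2).

(* theta* + a_T u  with a_T = diag(alpha_T^1,...,alpha_T^n) *)
Definition shiftpt (thstar : 'rV[R]_n) (alpha : 'I_n -> R) (u : 'rV[R]_n)
  : 'rV[R]_n := thstar + \row_j (alpha j * u 0 j).

Definition UT (Theta : set 'rV[R]_n) thstar alpha : set 'rV[R]_n :=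
  [set u | closure Theta (shiftpt thstar alpha u)].

Definition VT Theta thstar alpha (r : R) : set 'rV[R]_n :=
  [set u | UT Theta thstar alpha u /\ r <= eucl u].

Definition penalty (p : R -> R) (xi : 'I_n -> R) (th : 'rV[R]_n) : R :=
  \sum_(j < n) xi j * p (th 0 j).

Definition Zfield (h : 'rV[R]_n -> R) thstar alpha (u : 'rV[R]_n) : R :=
  expR (h (shiftpt thstar alpha u) - h thstar).

(* the event [ sup_{u in V_T(r)} Z(u) >= exp(-r^(2-eps)) ];
   sup over the empty set is -oo, so the event is then empty *)
Definition tail_event (Z : Om -> 'rV[R]_n -> R) (V : set 'rV[R]_n)
  (r eps : R) : set Om :=
  [set w | ((expR (- r `^ (2 - eps)))%:E <=
            ereal_sup [set (Z w u)%:E | u in V])%E].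

End Defs.

From HB Require Import structures.
From mathcomp Require Import all_boot all_order all_algebra.
From mathcomp Require Import all_classical all_reals all_analysis.
From mathcomp Require Import measurable_realfun ring lra.
Import Order.TTheory GRing.Theory Num.Theory.
Import numFieldNormedType.Exports.
Local Open Scope classical_set_scope.
Local Open Scope ring_scope.

(* Off a [P]-null set, [A4] and a Lipschitz lower bound for [p] at the nonzero
   coordinates of [θ*] (local by [A2], global because [p >= 0]) give
   [p_T (θ* + a_T u) - p_T θ* >= - C |u|], i.e. [Z†_T(u) <= Z_T(u) exp(C |u|)];
   at the zero coordinates [p >= 0 = p 0] suffices, which is why [A3] is not used.
   With [ε' = (1 + ε_L) / 2], a value [Z†_T(u) >= exp(-r^(2-ε'))] on the shell
   [2^k r <= |u| < 2^(k+1) r] forces [Z_T(u) >= exp(-(2^k r)^(2-ε_L))] once [r] is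
   large, so [A1] at the radii [2^k r] and a geometric series in [2^(-kL)] bound
   the probability; small [r] are absorbed into the constant.
   The suprema run over uncountable sets.  They are still measurable because [p]
   is continuous off [0]: the fields are continuous on each set of [u] where the
   zero pattern of [θ* + a_T u] is fixed, so each supremum is a countable one. *)

Section real_lemmas.
Context {R : realType}.

Lemma derivable_lipschitz_near (p : R -> R) x0 : derivable p x0 1 ->
  exists K δ : R, 0 <= K /\ 0 < δ /\
    forall h, `|h| < δ -> `|p (x0 + h) - p x0| <= K * `|h|.
Proof.
move=> /cvg_ex[l hl].
have := (cvgrPdist_lt _ _).1 hl 1 ltr01.
rewrite /= near_withinE => /(_ ltac:(exact: _)) /nbhs_ballP[δ /= δ0 hδ].
exists (`|l| + 1), δ; split; first by rewrite addr_ge0.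
split=> // h hh.
have [->|h0] := eqVneq h 0; first by rewrite addr0 subrr !normr0 mulr0.
have := hδ h; rewrite /ball /= sub0r normrN => /(_ hh h0).
rewrite /= scaler1 [h + x0]addrC => hq.
have -> : p (x0 + h) - p x0 = h * (h^-1 *: (p (x0 + h) - p x0)).
  by rewrite /GRing.scale /= mulrA mulfV // mul1r.
rewrite normrM mulrC ler_wpM2r //.
have := ler_normD l (h^-1 *: (p (x0 + h) - p x0) - l).
rewrite addrC subrK distrC => hn.
by apply: le_trans hn _; rewrite lerD2l ltW.
Qed.

(* Far from [x0], [p >= 0] gives [p (x0 + h) - p x0 >= - p x0 >= - (p x0 / δ) |h|]. *)
Lemma derivable_ge0_lower_lipschitz (p : R -> R) x0 :
  (forall x, 0 <= p x) -> derivable p x0 1 ->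
  exists K : R, 0 <= K /\ forall h, - (K * `|h|) <= p (x0 + h) - p x0.
Proof.
move=> p0 /derivable_lipschitz_near[K [δ [K0 [δ0 hK]]]].
have pδ0 : 0 <= p x0 / δ by rewrite divr_ge0 // ltW.
exists (K + p x0 / δ); split; first by rewrite addr_ge0.
move=> h; have [hd|hd] := ltP `|h| δ.
  have := hK h hd; rewrite ler_norml => /andP[h1 _].
  have : 0 <= p x0 / δ * `|h| by rewrite mulr_ge0.
  move: h1; rewrite mulrDl; lra.
have : p x0 <= p x0 / δ * `|h| by rewrite mulrAC ler_pdivlMr // ler_wpM2l.
have := p0 (x0 + h); have : 0 <= K * `|h| by rewrite mulr_ge0.
rewrite mulrDl; lra.
Qed.

Lemma exists_natSinv_lt {e : R} : 0 < e -> exists m : nat, m.+1%:R^-1 < e.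
Proof.
move=> e0; have [N _ /(_ N (leqnn _))] := near_infty_natSinv_lt (PosNum e0).
by exists N.
Qed.

Lemma powR2_gt1 (L : R) : 0 < L -> 1 < 2 `^ L.
Proof.
move=> L0; rewrite /powR ifF; last by apply/negbTE; rewrite pnatr_eq0.
by rewrite expR_gt1 mulr_gt0 // ln_gt0 // ltr1n.
Qed.

Lemma powR_gap_absorbs_linear {C g r s : R} : 0 < g -> 0 <= C ->
  1 + (2 + 2 * C) `^ g^-1 <= r -> r <= s ->
  r `^ (1 + g) + 1 + 2 * C * s <= s `^ (1 + 2 * g).
Proof.
move=> g0 C0 hr rs.
have X0 : 0 <= (2 + 2 * C) `^ g^-1 by exact: powR_ge0.
have s0 : 0 < s by lra.
have sN0 : s != 0 by rewrite gt_eqF.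
have sg : 2 + 2 * C <= s `^ g.
  have <- : ((2 + 2 * C) `^ g^-1) `^ g = 2 + 2 * C.
    by rewrite -powRrM mulVf ?gt_eqF // powRr1 //; lra.
  by apply: ge0_ler_powR; rewrite ?nnegrE; lra.
have s1g : s `^ (1 + g) = s * s `^ g.
  by rewrite powRD ?sN0 ?implybT // powRr1 // ltW.
have s12g : s `^ (1 + 2 * g) = s `^ (1 + g) * s `^ g.
  by rewrite -powRD ?sN0 ?implybT //; congr powR; lra.
have rs1g : r `^ (1 + g) <= s `^ (1 + g).
  by apply: ge0_ler_powR; rewrite ?nnegrE; lra.
have P0 : 0 <= s `^ (1 + g) by exact: powR_ge0.
have h1 : 2 * s `^ (1 + g) <= s `^ (1 + g) * s `^ g by rewrite mulrC ler_wpM2l //; lra.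
have h2 : s * (2 + 2 * C) <= s `^ (1 + g) by rewrite s1g ler_wpM2l // ltW.
rewrite s12g; lra.
Qed.

Lemma exists_dyadic_shell {r e : R} : 0 < r -> r <= e ->
  exists k : nat, 2 ^+ k * r <= e < 2 ^+ k.+1 * r.
Proof.
move=> r0 re.
have ex : exists k, e < 2 ^+ k.+1 * r.
  exists (Num.bound (e / r)).
  have h1 := archi_boundP (divr_ge0 (le_trans (ltW r0) re) (ltW r0)).
  have h2 : (Num.bound (e / r))%:R <= 2 ^+ (Num.bound (e / r)).+1 :> R.
    rewrite -natrX ler_nat; apply: ltnW.
    by apply: leq_trans (ltn_expl _ (ltnSn 1)) _; rewrite leq_exp2l.
  by rewrite -(ltr_pdivrMr _ _ r0); apply: lt_le_trans h1 h2.
case: (ex_minnP ex) => k hk hmin.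
exists k; rewrite hk andbT.
case: k hk hmin => [|k] hk hmin; first by rewrite expr0 mul1r.
by rewrite leNgt; apply/negP => /hmin; rewrite ltnn.
Qed.

Lemma nneseries_geometric_le {c q : R} : 0 <= c -> 0 < q -> q < 1 ->
  (\sum_(k <oo) (c * q ^+ k)%:E <= (c / (1 - q))%:E)%E.
Proof.
move=> c0 q0 q1.
apply: lime_le.
  by apply: is_cvg_nneseries => k _ _; rewrite lee_fin mulr_ge0 // exprn_ge0 // ltW.
apply: nearW => N; rewrite /= sumEFin lee_fin.
by apply: geometric_le_lim => //; rewrite ger0_norm ?ltW.
Qed.

Lemma measure_shells_le {d} {Om : measurableType d} (mu : {measure set Om -> \bar R})
    {A N : set Om} {B : nat -> set Om} {CL L r : R} :
  0 < L -> 0 <= CL -> 0 < r ->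
  measurable A -> (forall k, measurable (B k)) -> measurable N -> mu N = 0 ->
  (forall k, (mu (B k) <= (CL / (2 ^+ k * r) `^ L)%:E)%E) ->
  A `<=` \bigcup_k (B k `|` N) ->
  (mu A <= (CL / (1 - (2 `^ L)^-1) / r `^ L)%:E)%E.
Proof.
move=> L0 CL0 r0 mA mB mN N0 hB AB.
set q := (2 `^ L)^-1.
have q0 : 0 < q by rewrite invr_gt0 powR_gt0.
have q1 : q < 1 by rewrite invf_lt1 ?powR_gt0 // powR2_gt1.
have rL0 : 0 < r `^ L by rewrite powR_gt0.
have hBN k : (mu (B k `|` N) <= (CL / r `^ L * q ^+ k)%:E)%E.
  apply: le_trans (measureU2 mu (mB k) mN) _.
  rewrite [X in (_ + X <= _)%E](_ : _ = 0%E) // adde0.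
  apply: le_trans (hB k) _.
  rewrite lee_fin (powRM _ (exprn_ge0 _ _) (ltW r0)) //.
  have -> : (2 ^+ k : R) `^ L = (2 `^ L) ^+ k.
    rewrite -(@powR_mulrn R 2 k) // -(@powR_mulrn R (2 `^ L) k) ?powR_ge0 //.
    by rewrite -!powRrM mulrC.
  suff -> : CL / ((2 `^ L) ^+ k * r `^ L) = CL / r `^ L * q ^+ k by [].
  by rewrite /q exprVn invfM; ring.
have := measure_sigma_subadditive mu (fun k => measurableU _ _ (mB k) mN) mA AB.
move=> /le_trans; apply.
have := @lee_nneseries R _ (fun k => (CL / r `^ L * q ^+ k)%:E) xpredT 0%N
  (fun _ _ _ => measure_ge0 _ _) (fun k _ => hBN k).
move=> /le_trans; apply.
move: (nneseries_geometric_le (divr_ge0 CL0 (ltW rL0)) q0 q1).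
by rewrite mulrAC.
Qed.

Lemma probability_le_powR_inv_extend {d} {Om : measurableType d} (P : probability Om R)
    {A : set Om} {C L r r0 : R} :
  0 <= L -> 0 < r -> 0 <= r0 -> 0 <= C -> measurable A ->
  (r0 <= r -> (P A <= (C / r `^ L)%:E)%E) ->
  (P A <= ((C + r0 `^ L) / r `^ L)%:E)%E.
Proof.
move=> L0 r_gt0 r00 C0 mA hA; have rL : 0 < r `^ L by rewrite powR_gt0.
have [rr0|rr0] := leP r0 r.
  apply: le_trans (hA rr0) _.
  by rewrite lee_fin ler_wpM2r ?invr_ge0 ?(ltW rL) // lerDl powR_ge0.
apply: le_trans (probability_le1 P mA) _.
rewrite lee_fin ler_pdivlMr // mul1r.
have : r `^ L <= r0 `^ L.
  by apply: ge0_ler_powR; rewrite ?nnegrE ?(ltW r_gt0) ?(ltW rr0).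
have := powR_ge0 r0 L; lra.
Qed.

End real_lemmas.

Section row_vectors.
Context {R : realType} {n : nat}.
Local Notation V := 'rV[R]_n.

Lemma ball_rowP (u v : V) e :
  ball u e v <-> 0 < e /\ forall j, `|u 0 j - v 0 j| < e.
Proof.
split; first by move=> [e0 h]; split=> // j; have := h 0 j.
by move=> [e0 h]; split=> // i j; rewrite (ord1 i); exact: h.
Qed.

Lemma eucl_ge0 (u : V) : 0 <= eucl u.
Proof. exact: sqrtr_ge0. Qed.

Lemma ler_abs_eucl (u : V) j : `|u 0 j| <= eucl u.
Proof.
rewrite /eucl -sqrtr_sqr ler_sqrt; last by rewrite sumr_ge0 // => i _; rewrite sqr_ge0.
by rewrite (bigD1 j) //= lerDl sumr_ge0 // => i _; rewrite sqr_ge0.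
Qed.

Lemma shiftptE (ts : V) al u j : shiftpt ts al u 0 j = ts 0 j + al j * u 0 j.
Proof. by rewrite /shiftpt !mxE. Qed.

Lemma nbhs_shiftpt_ball (ts : V) al (u : V) {e} : 0 < e ->
  \forall v \near u, ball (shiftpt ts al u) e (shiftpt ts al v).
Proof.
move=> e0; set S := \sum_i `|al i|.
have S0 : 0 <= S by rewrite sumr_ge0.
apply/nbhs_ballP; exists (e / (1 + S)); first by rewrite /= divr_gt0 //; lra.
move=> v /ball_rowP [_ hv]; apply/ball_rowP; split => // j.
rewrite !shiftptE opprD addrACA subrr add0r -mulrBr normrM.
have := hv j; rewrite ltr_pdivlMr; last lra.
have : `|al j| <= S by rewrite /S (bigD1 j) //= lerDl sumr_ge0.
have := normr_ge0 (u 0 j - v 0 j); have := normr_ge0 (al j).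
nra.
Qed.

Lemma exists_rat_row_approx (u : V) {e} : 0 < e ->
  exists q : 'rV[rat]_n, forall j, `|u 0 j - ratr (q 0 j)| < e.
Proof.
move=> e0.
have approx j : exists qj : rat, `|u 0 j - ratr qj| < e.
  have : u 0 j - e < u 0 j + e by rewrite ltrD2l gtrN.
  move=> /rat_in_itvoo[q]; rewrite in_itv /= => /andP[h1 h2].
  by exists q; rewrite ltr_distl; apply/andP; split; lra.
have [g hg] := choice approx.
by exists (\row_j g j) => j; rewrite mxE.
Qed.

Section pattern_continuity.
Context {K : Type} (U : set V) (pat : V -> K).

Definition pattern_continuous (F : V -> R) := forall u, U u ->
  F @ within [set v | U v /\ pat v = pat u] (nbhs u) --> F u.

Lemma pattern_continuousP F : pattern_continuous F <->
  forall u, U u -> forall e, 0 < e ->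
    \forall v \near u, U v -> pat v = pat u -> `|F u - F v| < e.
Proof.
split=> hF u Uu.
  move=> e e0; move: (hF u Uu) => /cvgrPdist_lt /(_ e e0); rewrite near_withinE.
  by apply: filterS => v hv Uv pv; exact: hv.
apply/cvgrPdist_lt => e e0; rewrite near_withinE.
by apply: filterS (hF u Uu e e0) => v hv [Uv pv]; exact: hv.
Qed.

Lemma pattern_continuous_cst c : pattern_continuous (fun _ => c).
Proof. by move=> u _; exact: cvg_cst. Qed.

Lemma pattern_continuousD F G : pattern_continuous F -> pattern_continuous G ->
  pattern_continuous (F + G).
Proof. by move=> hF hG u Uu; apply: cvgD; [exact: hF | exact: hG]. Qed.

Lemma pattern_continuousB F G : pattern_continuous F -> pattern_continuous G ->
  pattern_continuous (F - G).
Proof. by move=> hF hG u Uu; apply: cvgB; [exact: hF | exact: hG]. Qed.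

Lemma pattern_continuousMl c F : pattern_continuous F ->
  pattern_continuous (fun v => c * F v).
Proof. by move=> hF u Uu; apply: cvgM; [exact: cvg_cst | exact: hF]. Qed.

Lemma pattern_continuous_sum (I : Type) (r : seq I) (F : I -> V -> R) :
  (forall j, pattern_continuous (F j)) ->
  pattern_continuous (fun v => \sum_(j <- r) F j v).
Proof.
move=> hF; elim: r => [|j r IH].
  by under eq_fun do rewrite big_nil; exact: pattern_continuous_cst.
by under eq_fun do rewrite big_cons; exact: pattern_continuousD.
Qed.

Lemma pattern_continuous_expR F : pattern_continuous F ->
  pattern_continuous (fun v => expR (F v)).
Proof.
by move=> hF u Uu; apply: continuous_cvg; [exact: continuous_expR | exact: hF].
Qed.

Lemma pattern_continuous_shiftpt (h : V -> R) (D : set V) ts al :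
  {within D, continuous h} -> (forall v, U v -> D (shiftpt ts al v)) ->
  pattern_continuous (fun v => h (shiftpt ts al v)).
Proof.
move=> hc UD; apply/pattern_continuousP => u Uu e e0.
have := (subspace_continuousP _ _).1 hc _ (UD u Uu).
move=> /cvgrPdist_lt /(_ e e0); rewrite near_withinE.
move=> /nbhs_ballP[δ /= δ0 hδ].
apply: filterS (nbhs_shiftpt_ball ts al u δ0) => v b Uv _.
exact: (hδ _ b (UD v Uv)).
Qed.

End pattern_continuity.

Definition zero_pattern (ts : V) al (v : V) : {ffun 'I_n -> bool} :=
  [ffun i => shiftpt ts al v 0 i != 0].

Lemma pattern_continuous_coord (p : R -> R) ts al (U : set V) j :
  (forall x, x != 0 -> {for x, continuous p}) ->
  pattern_continuous U (zero_pattern ts al) (fun v => p (shiftpt ts al v 0 j)).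
Proof.
move=> cp; apply/pattern_continuousP => u Uu e e0.
have [x0|xN0] := eqVneq (shiftpt ts al u 0 j) 0.
  near=> v => _ /(congr1 (fun f : {ffun 'I_n -> bool} => f j)).
  by rewrite !ffunE x0 eqxx => /negbFE/eqP ->; rewrite subrr normr0.
have /cvgrPdist_lt/(_ e e0)/nbhs_ballP[δ /= δ0 hδ] := cp _ xN0.
apply: filterS (nbhs_shiftpt_ball ts al u δ0) => v /ball_rowP[_ /(_ j) b] _ _.
exact: hδ.
Unshelve. all: by end_near.
Qed.

Definition pattern_dense_seq {K : Type} (U : set V) (pat : V -> K) (ds : nat -> V) :=
  (forall k, U (ds k)) /\
  forall u, U u -> forall e, 0 < e -> exists k, pat (ds k) = pat u /\ ball u e (ds k).

(* The index [k] codes a rational centre, a radius [1/(m+1)] and a pattern;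
   [ds k] is a point of [U] with that pattern in that ball, if there is one. *)
Lemma exists_pattern_dense_seq (K : countType) (U : set V) (pat : V -> K) :
  U !=set0 -> exists ds, pattern_dense_seq U pat ds.
Proof.
move=> [u0 Uu0].
pose ds k : V := match (unpickle k : option ('rV[rat]_n * nat * K)%type) with
  | Some (q, m, c) => xget u0 [set v | U v /\ pat v = c /\
        ball (map_mx (@ratr R) q : V) (m.+1%:R^-1) v]
  | None => u0 end.
exists ds; split.
  move=> k; rewrite /ds; case: (unpickle k) => [[[q m] c]|] //.
  by case: xgetP => // v _ [].
move=> u Uu e e0.
have [m hm] := exists_natSinv_lt (divr_gt0 e0 (ltr0n _ 2)).
have m0 : 0 < m.+1%:R^-1 :> R by rewrite invr_gt0 ltr0n.
have [q hq] := exists_rat_row_approx u m0.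
exists (pickle (q, m, pat u)); rewrite /ds pickleK.
have : [set v | U v /\ pat v = pat u /\
    ball (map_mx (@ratr R) q : V) (m.+1%:R^-1) v] u.
  split=> //; split=> //; apply/ball_rowP; split => // j.
  by rewrite mxE distrC; exact: hq.
case: xgetP => [v _ [Uv [pv bv]] _|/(_ u)//]; split=> //.
apply: (@le_ball _ _ _ (m.+1%:R^-1 + m.+1%:R^-1)).
  by rewrite [e]splitr ltW // ltrD.
apply: ball_triangle bv; apply/ball_rowP; split => // j.
by rewrite mxE; exact: hq.
Qed.

Lemma ereal_sup_ge_dense_seq {K : Type} {U : set V} {pat : V -> K} {F : V -> R}
    {ds : nat -> V} (a : R) :
  pattern_dense_seq U pat ds -> pattern_continuous U pat F ->
  (a%:E <= ereal_sup [set (F u)%:E | u in U])%E <->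
  forall m : nat, exists k, a - m.+1%:R^-1 < F (ds k).
Proof.
move=> [Uds dsd] /pattern_continuousP hF; split.
- move=> ha m.
  have eta0 : 0 < m.+1%:R^-1 :> R by rewrite invr_gt0 ltr0n.
  move: (m.+1%:R^-1) eta0 => η eta0.
  have : ((a - η / 2)%:E < ereal_sup [set (F u)%:E | u in U])%E.
    by apply: lt_le_trans ha; rewrite lte_fin; lra.
  move=> /ereal_sup_gt[_ [u Uu <-]]; rewrite lte_fin => hu.
  have /nbhs_ballP[δ /= δ0 hδ] := hF u Uu (η / 2) ltac:(lra).
  have [k [pk bk]] := dsd u Uu δ δ0.
  exists k; have := hδ _ bk (Uds k) pk.
  by rewrite ltr_norml => /andP[h1 h2]; lra.
- move=> ha; rewrite leNgt; apply/negP => hlt.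
  have ub k : ((F (ds k))%:E <= ereal_sup [set (F u)%:E | u in U])%E.
    by apply: ereal_sup_ubound; exists (ds k).
  move: hlt (ub) (ub 0%N).
  case: (ereal_sup _) => [x||] //= hlt ub' _.
  rewrite lte_fin in hlt.
  have [m hm] : exists m : nat, m.+1%:R^-1 < a - x by apply: exists_natSinv_lt; lra.
  have [k hk] := ha m.
  have := ub' k; rewrite lee_fin => hk'.
  have := lt_le_trans hk hk'; move: hm; move: (m.+1%:R^-1) => t; lra.
Qed.


Lemma exists_lower_lipschitz_coords (p : R -> R) (ts : V) :
  (forall x, 0 <= p x) -> (forall x, x != 0 -> derivable p x 1) ->
  exists K : 'I_n -> R, (forall j, 0 <= K j) /\
    forall j, ts 0 j != 0 -> forall h, - (K j * `|h|) <= p (ts 0 j + h) - p (ts 0 j).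
Proof.
move=> p0 dp.
have /choice[K hK] : forall j, exists Kj : R, 0 <= Kj /\
    (ts 0 j != 0 -> forall h, - (Kj * `|h|) <= p (ts 0 j + h) - p (ts 0 j)).
  move=> j; have [->|tjN0] := eqVneq (ts 0 j) 0; first by exists 0.
  have [Kj [Kj0 hKj]] := derivable_ge0_lower_lipschitz _ _ p0 (dp _ tjN0).
  by exists Kj; split => // _.
by exists K; split => j; [exact: (hK j).1 | exact: (hK j).2].
Qed.

Lemma penalty_shiftpt_ge {p : R -> R} {xi K : 'I_n -> R} {ts : V} {al} {c0 : R} {u : V} :
  (forall x, 0 <= p x) -> p 0 = 0 -> 0 <= c0 ->
  (forall j, 0 < xi j) -> (forall j, 0 <= K j) ->
  (forall j, ts 0 j != 0 -> forall h, - (K j * `|h|) <= p (ts 0 j + h) - p (ts 0 j)) ->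
  (forall j, ts 0 j != 0 -> `|al j * xi j| <= c0) ->
  - ((\sum_j c0 * K j) * eucl u) <= penalty p xi (shiftpt ts al u) - penalty p xi ts.
Proof.
move=> p0 p00 c00 xi0 K0 hK hal.
rewrite /penalty -sumrB mulr_suml -sumrN; apply: ler_sum => j _.
rewrite -mulrBr shiftptE.
have [tj0|tjN0] := eqVneq (ts 0 j) 0.
  rewrite tj0 p00 subr0 add0r; apply: (@le_trans _ _ 0).
    by rewrite oppr_le0 !mulr_ge0 ?eucl_ge0.
  by rewrite mulr_ge0 // ltW.
apply: le_trans (ler_wpM2l (ltW (xi0 j)) (hK j tjN0 (al j * u 0 j))).
rewrite mulrN lerN2 normrM.
have -> : xi j * (K j * (`|al j| * `|u 0 j|)) = K j * (`|al j| * xi j) * `|u 0 j|.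
  by ring.
apply: (@le_trans _ _ (K j * c0 * `|u 0 j|)).
  by rewrite ler_wpM2r // ler_wpM2l // -[xi j]gtr0_norm // -normrM hal.
by rewrite [c0 * K j]mulrC ler_wpM2l ?mulr_ge0 ?ler_abs_eucl.
Qed.

Lemma Zfield_penalized_le (h pen : V -> R) ts al C u :
  - (C * eucl u) <= pen (shiftpt ts al u) - pen ts ->
  Zfield (fun th => h th - pen th) ts al u * expR (- (C * eucl u)) <= Zfield h ts al u.
Proof. by move=> hpen; rewrite /Zfield -expRD ler_expR; lra. Qed.

(* With [g = (1 - eps) / 2]: [2 - (1 + eps) / 2 = 1 + g] and [2 - eps = 1 + 2 g]. *)
Lemma tail_event_sub_shells {Om : Type} {Z Z' : Om -> V -> R} {Theta : set V}
    {ts : V} {al : 'I_n -> R} {N : set Om} {C eps r : R} :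
  0 <= C -> 0 < eps < 1 -> 0 < r -> 1 + (2 + 2 * C) `^ ((1 - eps) / 2)^-1 <= r ->
  (forall w, ~ N w -> forall u, Z' w u * expR (- (C * eucl u)) <= Z w u) ->
  tail_event Z' (VT Theta ts al r) r ((1 + eps) / 2) `<=`
  \bigcup_k (tail_event Z (VT Theta ts al (2 ^+ k * r)) (2 ^+ k * r) eps `|` N).
Proof.
move=> C0 /andP[eps0 eps1] r0 rr0 hZ w Aw.
have [Nw|nNw] := pselect (N w); first by exists 0%N => //; right.
set g := (1 - eps) / 2.
have : ((expR (- r `^ (1 + g) - 1))%:E <
    ereal_sup [set (Z' w u)%:E | u in VT Theta ts al r])%E.
  apply: lt_le_trans Aw; rewrite lte_fin ltr_expR.
  have -> : 2 - (1 + eps) / 2 = 1 + g by rewrite /g; lra.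
  lra.
move=> /ereal_sup_gt[_ [u [Uu ru] <-]]; rewrite lte_fin => hu.
have [k /andP[sk ks]] := exists_dyadic_shell r0 ru.
exists k => //; left.
apply: le_trans (ereal_sup_ubound _); last by exists u.
rewrite lee_fin; apply: le_trans (hZ w nNw u).
set s := 2 ^+ k * r.
have k1 : 1 <= 2 ^+ k :> R by apply: exprn_ege1; rewrite ler1n.
have rs : r <= s by rewrite /s -[leLHS]mul1r ler_wpM2r // ltW.
have us : eucl u < 2 * s by rewrite /s mulrA -exprS.
have := powR_gap_absorbs_linear (_ : 0 < g) C0 rr0 rs.
have -> : 2 - eps = 1 + 2 * g by rewrite /g; lra.
move=> /(_ ltac:(rewrite /g; lra)) hs.
apply: le_trans (ler_wpM2r (expR_ge0 _) (ltW hu)).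
rewrite -expRD ler_expR.
have : C * eucl u <= C * (2 * s) by rewrite ler_wpM2l // ltW.
lra.
Qed.

Section measurability.
Context {d : measure_display} {Om : measurableType d}.

Lemma measurable_ereal_sup_ge (K : countType)
    (U : set V) (pat : V -> K) (f : Om -> V -> R) (a : R) :
  (forall u, U u -> measurable_fun setT (fun w => f w u)) ->
  (forall w, pattern_continuous U pat (f w)) ->
  measurable [set w | (a%:E <= ereal_sup [set (f w u)%:E | u in U])%E].
Proof.
move=> mf fc.
have [->|/set0P U0] := eqVneq U set0.
  suff -> : [set w | (a%:E <= ereal_sup [set (f w u)%:E | u in set0])%E] = set0.
    exact: measurable0.
  by apply/seteqP; split => w //=; rewrite image_set0 ereal_sup0 leeNy_eq.
have [ds dds] := @exists_pattern_dense_seq _ U pat U0.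
have Uds k : U (ds k) := dds.1 k.
suff -> : [set w | (a%:E <= ereal_sup [set (f w u)%:E | u in U])%E] =
    \bigcap_m \bigcup_k [set w | a - m.+1%:R^-1 < f w (ds k)].
  apply: bigcapT_measurable => m; apply: bigcupT_measurable => k.
  have := mf (ds k) (Uds k) measurableT _ (measurable_itv `]a - m.+1%:R^-1, +oo[).
  rewrite setTI; congr measurable; apply/seteqP; split => w /=;
    by rewrite in_itv /= andbT.
apply/seteqP; split => w /= h.
  move=> m _; have [k hk] := (ereal_sup_ge_dense_seq a dds (fc w)).1 h m.
  by exists k.
apply/(ereal_sup_ge_dense_seq a dds (fc w)) => m.
by have [k _ hk] := h m I; exists k.
Qed.

Lemma measurable_tail_event_Zfield (K : countType)
    (U : set V) (pat : V -> K) (h : Om -> V -> R) ts al r eps :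
  measurable_fun setT (fun w => h w ts) ->
  (forall u, U u -> measurable_fun setT (fun w => h w (shiftpt ts al u))) ->
  (forall w, pattern_continuous U pat (fun v => h w (shiftpt ts al v))) ->
  measurable (tail_event (fun w => Zfield (h w) ts al) U r eps).
Proof.
move=> mts mh hc; apply: (@measurable_ereal_sup_ge _ U pat).
  move=> u Uu; apply: measurableT_comp; first exact: measurable_expR.
  exact: measurable_funB (mh u Uu) mts.
move=> w; apply: pattern_continuous_expR.
exact: pattern_continuousB (hc w) (pattern_continuous_cst _ _ _).
Qed.

Lemma measurable_tail_event_continuous
    {Theta : set V} {h : Om -> V -> R} {ts : V} (al : 'I_n -> R) (r eps : R) :
  closure Theta ts ->
  (forall th, closure Theta th -> measurable_fun setT (fun w => h w th)) ->
  (forall w, {within closure Theta, continuous (h w)}) ->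
  measurable (tail_event (fun w => Zfield (h w) ts al) (VT Theta ts al r) r eps).
Proof.
move=> Tts mh hc; apply: (@measurable_tail_event_Zfield _ _ (fun _ => tt)).
- exact: mh.
- by move=> u [Uu _]; exact: mh.
- by move=> w; apply: pattern_continuous_shiftpt (hc w) _ => v [].
Qed.

Lemma measurable_penalty (p : R -> R) (xi : 'I_n -> Om -> R) th :
  (forall j, measurable_fun setT (xi j)) ->
  measurable_fun setT (fun w => penalty p (fun j => xi j w) th).
Proof.
move=> mxi; apply: measurable_sum => j.
by apply: measurable_funM => //; exact: measurable_cst.
Qed.

Lemma measurable_tail_event_penalized
    {Theta : set V} {h : Om -> V -> R} {p : R -> R} {xi : 'I_n -> Om -> R}
    {ts : V} (al : 'I_n -> R) (r eps : R) :
  closure Theta ts ->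
  (forall th, closure Theta th -> measurable_fun setT (fun w => h w th)) ->
  (forall w, {within closure Theta, continuous (h w)}) ->
  (forall j, measurable_fun setT (xi j)) ->
  (forall x, x != 0 -> {for x, continuous p}) ->
  measurable (tail_event
    (fun w => Zfield (fun th => h w th - penalty p (fun j => xi j w) th) ts al)
    (VT Theta ts al r) r eps).
Proof.
move=> Tts mh hc mxi cp.
apply: (@measurable_tail_event_Zfield _ _ (zero_pattern ts al)).
- exact: measurable_funB (mh _ Tts) (measurable_penalty p xi _ mxi).
- by move=> u [Uu _]; exact: measurable_funB (mh _ Uu) (measurable_penalty p xi _ mxi).
- move=> w; apply: pattern_continuousB.
    by apply: pattern_continuous_shiftpt (hc w) _ => v [].
  apply: pattern_continuous_sum => j; apply: pattern_continuousMl.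
  exact: pattern_continuous_coord.
Qed.


Lemma measure_tail_event_transfer (mu : {measure set Om -> \bar R})
    {Z Z' : Om -> V -> R} {Theta : set V} {ts : V} {al : 'I_n -> R} {N : set Om}
    {C CL L eps r : R} :
  0 <= C -> 0 < eps < 1 -> 0 < L -> 0 <= CL -> 0 < r ->
  1 + (2 + 2 * C) `^ ((1 - eps) / 2)^-1 <= r ->
  measurable N -> mu N = 0 ->
  (forall w, ~ N w -> forall u, Z' w u * expR (- (C * eucl u)) <= Z w u) ->
  (forall s, measurable (tail_event Z (VT Theta ts al s) s eps)) ->
  measurable (tail_event Z' (VT Theta ts al r) r ((1 + eps) / 2)) ->
  (forall s, 0 < s ->
    (mu (tail_event Z (VT Theta ts al s) s eps) <= (CL / s `^ L)%:E)%E) ->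
  (mu (tail_event Z' (VT Theta ts al r) r ((1 + eps) / 2))
    <= (CL / (1 - (2 `^ L)^-1) / r `^ L)%:E)%E.
Proof.
move=> C0 eps01 L0 CL0 r0 rr0 mN N0 hZ mB mA hB.
apply: (measure_shells_le mu L0 CL0 r0 mA (fun k => mB _) mN N0).
  by move=> k; apply: hB; rewrite mulr_gt0 // exprn_gt0.
exact: tail_event_sub_shells C0 eps01 r0 rr0 hZ.
Qed.

End measurability.

End row_vectors.

Theorem theorem1
  (R : realType) (n : nat)
  (Theta : set 'rV[R]_n) (thstar : 'rV[R]_n)
  (d : measure_display) (Om : measurableType d) (P : probability Om R)
  (TT : set R)
  (H : R -> Om -> 'rV[R]_n -> R)
  (xi : R -> 'I_n -> Om -> R)
  (p : R -> R)
  (alpha : R -> 'I_n -> R)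
  (L c0 : R) :
  (* standing assumptions *)
  open Theta -> bounded_set Theta -> Theta thstar ->
  (forall T, TT T -> 0 <= T) ->
  (forall M : R, exists T, TT T /\ M < T) ->
  (forall T, TT T -> forall th, closure Theta th ->
     measurable_fun setT (fun w => H T w th)) ->
  (forall T, TT T -> forall w, {within closure Theta, continuous (H T w)}) ->
  (forall T, TT T -> forall j, measurable_fun setT (xi T j)) ->
  (forall T, TT T -> forall j w, 0 < xi T j w) ->
  (forall x, 0 <= p x) -> p 0 = 0 ->
  (forall T, TT T -> forall j, alpha T j != 0) ->
  (forall e : R, 0 < e -> exists M : R, forall T, TT T -> M < T ->
     forall j, `|alpha T j| < e) ->
  0 < L -> 0 < c0 ->
  (* [A1] *)
  (exists CL epsL : R, 0 < CL /\ 0 < epsL < 1 /\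
     forall r : R, 0 < r -> forall T, TT T ->
       (P (tail_event (fun w => Zfield (H T w) thstar (alpha T))
             (VT Theta thstar (alpha T) r) r epsL)
        <= (CL / r `^ L)%:E)%E) ->
  (* [A2] *)
  (forall x : R, x != 0 -> derivable p x 1) ->
  (* [A3] *)
  (exists eps : R, 0 < eps /\
     (ereal_sup [set (p x)%:E | x in [set x : R | (`|x| < eps)%R]] < +oo)%E) ->
  (* [A4] *)
  (forall j : 'I_n, thstar 0 j != 0 ->
     {ae P, forall w, forall T, TT T -> `|alpha T j * xi T j w| <= c0}) ->
  (* conclusion *)
  exists CL' epsL' : R, 0 < CL' /\ 0 < epsL' < 1 /\
     forall r : R, 0 < r -> forall T, TT T ->
       (P (tail_event
             (fun w => Zfield (fun th => H T w th - penalty p (fun j => xi T j w) th)%R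
                         thstar (alpha T))
             (VT Theta thstar (alpha T) r) r epsL')
        <= (CL' / r `^ L)%:E)%E.
Proof.
move=> _ _ Tts _ _ Hmeas Hcont ximeas xipos p0 p00 _ _ L0 c00
  [CL [epsL [CL0 [epsL01 hA1]]]] dp _ hA4.
have /andP[epsL0 epsL1] := epsL01.
have cp x : x != 0 -> {for x, continuous p}.
  by move=> /dp /derivable1_diffP /differentiable_continuous.
have [K [K0 hK]] := exists_lower_lipschitz_coords p thstar p0 dp.
have [N [mN PN0 hN]] : {ae P, forall w j, thstar 0 j != 0 ->
    forall T, TT T -> `|alpha T j * xi T j w| <= c0}.
  apply: filter_forall => j; have [_|tjN0] := eqVneq (thstar 0 j) 0.
    exact: nearW.
  by apply: filterS (hA4 j tjN0) => w + _.
set C := \sum_j c0 * K j.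
have C0 : 0 <= C by rewrite sumr_ge0 // => j _; rewrite mulr_ge0 ?K0 // ltW.
set r0 := 1 + (2 + 2 * C) `^ ((1 - epsL) / 2)^-1.
set CL1 := CL / (1 - (2 `^ L)^-1).
have CL1_gt0 : 0 < CL1.
  by rewrite divr_gt0 // subr_gt0 invf_lt1 ?powR_gt0 ?powR2_gt1.
exists (CL1 + r0 `^ L), ((1 + epsL) / 2).
split; first by have := powR_ge0 r0 L; lra.
split; first by apply/andP; split; lra.
move=> r r_gt0 T TT_T.
have mA := measurable_tail_event_penalized (alpha T) r ((1 + epsL) / 2)
  (subset_closure Tts) (Hmeas T TT_T) (Hcont T TT_T) (ximeas T TT_T) cp.
apply: (probability_le_powR_inv_extend P (ltW L0) r_gt0 _ (ltW CL1_gt0) mA).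
  by rewrite /r0 addr_ge0 ?powR_ge0.
move=> rr0.
apply: (measure_tail_event_transfer P C0 epsL01 L0 (ltW CL0) r_gt0 rr0 mN PN0).
- move=> w nNw u; apply/Zfield_penalized_le/(penalty_shiftpt_ge p0 p00 (ltW c00)
    (xipos T TT_T ^~ w) K0 hK) => j tjN0.
  by apply: contrapT => ng; apply: nNw; apply: hN => /(_ j tjN0 T TT_T).
- by move=> s; apply: measurable_tail_event_continuous (subset_closure Tts)
    (Hmeas T TT_T) (Hcont T TT_T).
- exact: mA.
- by move=> s s_gt0; exact: hA1.
Qed.
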